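(* Fix a propositional language $\mathcal{L}$, a set $\Omega$ and a sound truth valuation $t:\mathcal{L}\to2^\Omega$. Let $A\subseteq S$ be a finite set of strategies. Then $s\in A$ is rationalizable via a likelihood function if and only if $t^m_\bullet(s)$ is pointwise undominated in the convex hull $co(t^m_\bullet(A))$.
   Context: Let $\mathbb{P}$ be a set of propositional variables containing distinguished $\mathbf{T}$, $\mathbf{F}$, and $\mathcal{L}$ the language generated by $\neg,\land,\lor$. A truth valuation $t:\mathcal{L}\to2^\Omega$ (with $t(\mathbf{T})=\Omega,t(\mathbf{F})=\emptyset$) is sound if it is exact (logically equivalent statements have equal images), monotone ($\phi\implies\psi\Rightarrow t(\phi)\subseteq t(\psi)$), symmetric ($t(\neg\phi)=\Omega\setminus t(\phi)$) and $\land$-distributive ($t(\phi\land\psi)=t(\phi)\cap t(\psi)$); then $t(\mathcal{L})$ is a field. A likelihood appraisal (likelihood function) on $(\Omega,t(\mathcal{L}))$ is any $\lambda:t(\mathcal{L})\to[0,1]$ with $\lambda(\emptyset)=0,\lambda(\Omega)=1$; $\int x\,\mathrm{d}\lambda=\int_{-\infty}^\infty\lambda(\{x\ge r\})\mathrm{d}r$. A strategy is a finitely supported $s:\mathcal{L}\to\mathbb{R}$; $S$ is the set of strategies; $t_\circ(s)=\sum_\phi s(\phi)\mathbf{1}_{t(\phi)}$. $s\in A$ is rationalizable via a likelihood function if there is a likelihood appraisal $\lambda$ on $(\Omega,t(\mathcal{L}))$ with $\int t_\circ(s)\mathrm{d}\lambda\ge\int t_\circ(s')\mathrm{d}\lambda$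 for all $s'\in A$. Maximal model relative to $(\Omega,t)$: for each $B\in t(\mathcal{L})\setminus\{\Omega,\emptyset\}$ let $\Omega^m_B=\{0_B,1_B\}$, $\Omega^m=\prod_B\Omega^m_B$, and $t^m(\phi)=\{\omega\in\Omega^m:\omega_{t(\phi)}=1_{t(\phi)}\}$ when $t(\phi)\notin\{\Omega,\emptyset\}$, $t^m(\phi)=\Omega^m$ when $t(\phi)=\Omega$, $t^m(\phi)=\emptyset$ when $t(\phi)=\emptyset$. For a strategy $s$, with $x=t_\circ(s)$ of image $\{\alpha_1>\dots>\alpha_n\}$, $\alpha_{n+1}=0$, and $\phi_k$ any statement with $t(\phi_k)=x^{-1}(\{\alpha_1,\dots,\alpha_k\})$, set $t^m_\bullet(s)=\sum_{k=1}^n(\alpha_k-\alpha_{k+1})\mathbf{1}_{t^m(\phi_k)}:\Omega^m\to\mathbb{R}$ (independent of the choice of $\phi_k$). Convex hull is taken pointwise; ''pointwise undominated'' is the Wald–Pearce notion: no element $y$ of $co(t^m_\bullet(A))$ satisfies $y(\omega)>t^m_\bullet(s)(\omega)$ for every $\omega\in\Omega^m$. *)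

From HB Require Import structures.
From mathcomp Require Import all_boot all_order all_algebra.
From mathcomp Require Import finmap.
From mathcomp Require Import boolp classical_sets functions cardinality fsbigop reals.
Unset Printing Implicit Defensive.
Import Order.TTheory GRing.Theory Num.Theory.
Local Open Scope classical_set_scope.
Local Open Scope ring_scope.

Inductive lform (P : Type) : Type :=
  | Var : P -> lform P
  | Neg : lform P -> lform P
  | And : lform P -> lform P -> lform P
  | Or  : lform P -> lform P -> lform P.
Arguments Var {P}. Arguments Neg {P}. Arguments And {P}. Arguments Or {P}.

HB.instance Definition _ (P : Type) := gen_eqMixin (lform P).
HB.instance Definition _ (P : Type) := gen_choiceMixin (lform P).

Fixpoint beval {P : Type} (v : P -> bool) (f : lform P) : bool :=
  match f with
  | Var p => v p
  | Neg g => ~~ beval v g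
  | And g h => beval v g && beval v h
  | Or g h => beval v g || beval v h
  end.

Definition admissible {P : Type} (T F : P) (v : P -> bool) : Prop :=
  v T = true /\ v F = false.

Definition implies {P : Type} (T F : P) (phi psi : lform P) : Prop :=
  forall v, admissible T F v -> beval v phi -> beval v psi.

Definition lequiv {P : Type} (T F : P) (phi psi : lform P) : Prop :=
  implies T F phi psi /\ implies T F psi phi.

Definition truth_valuation {P Omega : Type} (T F : P) (t : lform P -> set Omega) : Prop :=
  t (Var T) = setT /\ t (Var F) = set0.

Definition sound {P Omega : Type} (T F : P) (t : lform P -> set Omega) : Prop :=
  [/\ (forall phi psi, lequiv T F phi psi -> t phi = t psi),
      (forall phi psi, implies T F phi psi -> t phi `<=` t psi),
      (forall phi, t (Neg phi) = ~` t phi)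
    & (forall phi psi, t (And phi psi) = t phi `&` t psi)].

Definition strategy {R : realType} {P : Type} (s : lform P -> R) : Prop :=
  finite_set [set phi | s phi != 0].

Definition tcirc {R : realType} {P Omega : Type} (t : lform P -> set Omega)
  (s : lform P -> R) : Omega -> R :=
  fun w => \sum_(phi \in [set phi | s phi != 0]) s phi * (w \in t phi)%:R.

Definition values {R : realType} {Omega : Type} (x : Omega -> R) : seq R :=
  sort (fun a b => b <= a) (enum_fset (fset_set (range x))).

Fixpoint layer_sum {R : realType} {Omega : Type} (g : set Omega -> R)
  (x : Omega -> R) (vs : seq R) : R :=
  match vs with
  | [::] => 0
  | a :: rest => (a - head 0 rest) * g [set w | a <= x w] + layer_sum g x rest
  end.

Definition choquet {R : realType} {Omega : Type} (lambda : set Omega -> R)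
  (x : Omega -> R) : R :=
  layer_sum lambda x (values x).

(* likelihood appraisal on (Omega, t(L)) (values off t(L) are irrelevant) *)
Definition likelihood {R : realType} {P Omega : Type} (t : lform P -> set Omega)
  (lambda : set Omega -> R) : Prop :=
  [/\ lambda set0 = 0, lambda setT = 1
    & forall phi, 0 <= lambda (t phi) <= 1].

Definition rationalizable {R : realType} {P Omega : Type} (t : lform P -> set Omega)
  (A : set (lform P -> R)) (s : lform P -> R) : Prop :=
  exists lambda, likelihood t lambda /\
    forall s', A s' -> choquet lambda (tcirc t s') <= choquet lambda (tcirc t s).

Definition mindex {P Omega : Type} (t : lform P -> set Omega) (B : set Omega) : Prop :=
  (exists phi, t phi = B) /\ B <> setT /\ B <> set0.

Definition Omegam {P Omega : Type} (t : lform P -> set Omega) : Type :=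
  {B : set Omega | mindex t B} -> bool.

Definition tmS {P Omega : Type} (t : lform P -> set Omega) (B : set Omega)
  : set (Omegam t) :=
  fun w => B = setT \/ (B <> set0 /\ exists h : mindex t B, w (exist _ B h) = true).

Definition tm {P Omega : Type} (t : lform P -> set Omega) (phi : lform P)
  : set (Omegam t) := tmS t (t phi).

(* t^m_bullet(s) = sum_k (alpha_k - alpha_{k+1}) 1_{t^m(phi_k)},
   t(phi_k) = {x >= alpha_k}, x = t_o(s) *)
Definition tmbullet {R : realType} {P Omega : Type} (t : lform P -> set Omega)
  (s : lform P -> R) : Omegam t -> R :=
  fun w => layer_sum (fun B => (w \in tmS t B)%:R) (tcirc t s) (values (tcirc t s)).

Definition in_hull {R : realType} {P Omega : Type} (t : lform P -> set Omega)
  (A : set (lform P -> R)) (y : Omegam t -> R) : Prop :=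
  exists l : seq ((lform P -> R) * R),
    [/\ forall p, p \in l -> A p.1 /\ 0 <= p.2,
        \sum_(p <- l) p.2 = 1
      & forall w, y w = \sum_(p <- l) p.2 * tmbullet t p.1 w].

Definition pointwise_undominated {R : realType} {P Omega : Type} (t : lform P -> set Omega)
  (A : set (lform P -> R)) (s : lform P -> R) : Prop :=
  ~ exists y, in_hull t A y /\ forall w, tmbullet t s w < y w.

From mathcomp Require Import all_boot all_order all_algebra finmap.
From mathcomp Require Import boolp classical_sets cardinality fsbigop reals.
From mathcomp Require Import lra.
Import Order.TTheory GRing.Theory Num.Theory.
Set Implicit Arguments. Unset Strict Implicit. Unset Printing Implicit Defensive.
Local Open Scope classical_set_scope.
Local Open Scope ring_scope.

(* The value t^m_bullet(s)(w) is the Choquet integral of t_circ(s) against the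
   0-1 likelihood B |-> [w \in t^m(B)], and Choquet integrals are linear in the
   likelihood.  Hence, for a finitely supported probability mu on Omega^m, the
   expectation of t^m_bullet(s) is the Choquet integral of t_circ(s) against the
   marginal likelihood B |-> mu(t^m(B)).  Only the finitely many superlevel sets
   of the strategies involved matter; they lie in t(L), and the corresponding
   coordinates of Omega^m are independent bits.  So on these sets every likelihood
   is the marginal of a product of Bernoulli laws, and every marginal is a
   likelihood.  Rationalizability of s thus says that s is a best response to
   some probability on a finite set of points representing all of Omega^m, and by
   Ville's theorem of the alternative (proved by Fourier-Motzkin elimination) this
   fails exactly when a mixture of t^m_bullet(A) strictly dominates t^m_bullet(s)
   at every point. *)

Section WeightedSums.
Variables (R : realFieldType) (W : Type).
Implicit Types (mu : seq (R * W)) (f g : W -> R).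

(* A finitely supported measure on W is a list of (weight, point) pairs. *)
Definition wsum mu f := \sum_(x <- mu) x.1 * f x.2.
Definition mass mu := \sum_(x <- mu) x.1.
Definition distribution mu := all (fun x => 0 <= x.1) mu /\ mass mu = 1.

Lemma eq_wsum mu f g : f =1 g -> wsum mu f = wsum mu g.
Proof. by move=> fg; apply: eq_bigr => x _; rewrite fg. Qed.

Lemma wsumD mu f g : wsum mu (fun w => f w + g w) = wsum mu f + wsum mu g.
Proof. by rewrite /wsum -big_split; apply: eq_bigr => x _; rewrite mulrDr. Qed.

Lemma wsumB mu f g : wsum mu (fun w => f w - g w) = wsum mu f - wsum mu g.
Proof. by rewrite /wsum -sumrB; apply: eq_bigr => x _; rewrite mulrBr. Qed.

Lemma wsumZ mu c f : wsum mu (fun w => c * f w) = c * wsum mu f.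
Proof. by rewrite /wsum mulr_sumr; apply: eq_bigr => x _; rewrite mulrCA. Qed.

Lemma wsum_cst mu c : wsum mu (fun=> c) = mass mu * c.
Proof. by rewrite /wsum /mass mulr_suml. Qed.

Lemma wsum_sum (I : Type) (r : seq I) (c : I -> R) (F : I -> W -> R) mu :
  wsum mu (fun w => \sum_(i <- r) c i * F i w) = \sum_(i <- r) c i * wsum mu (F i).
Proof.
rewrite /wsum; under eq_bigr => x _ do rewrite mulr_sumr.
rewrite exchange_big; apply: eq_bigr => i _; rewrite mulr_sumr.
by apply: eq_bigr => x _; rewrite mulrCA.
Qed.

Lemma ler_wsum mu f g : all (fun x => 0 <= x.1) mu -> (forall w, f w <= g w) ->
  wsum mu f <= wsum mu g.
Proof.
move=> + le_fg; elim: mu => [|x mu IH] /=; first by rewrite /wsum !big_nil.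
by case/andP=> x_ge0 /IH; rewrite /wsum !big_cons; apply: lerD; rewrite ler_wpM2l.
Qed.

Lemma wsum_ge0 mu f :
  all (fun x => 0 <= x.1) mu -> (forall w, 0 <= f w) -> 0 <= wsum mu f.
Proof. by move=> mu_ge0 f_ge0; rewrite -[0](mulr0 (mass mu)) -wsum_cst ler_wsum. Qed.

Lemma wsum_gt0 mu f : all (fun x => 0 <= x.1) mu -> 0 < mass mu ->
  (forall w, 0 < f w) -> 0 < wsum mu f.
Proof.
move=> + + f_gt0; elim: mu => [|x mu IH] /=; first by rewrite /mass big_nil ltxx.
case/andP=> x_ge0 mu_ge0; rewrite /mass /wsum !big_cons -/(mass mu) -/(wsum mu f).
have rest_ge0 := wsum_ge0 mu_ge0 (fun w => ltW (f_gt0 w)).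
move: x_ge0; rewrite le_eqVlt => /orP[/eqP <-|x_gt0] mass_gt0.
  by rewrite add0r in mass_gt0; rewrite mul0r add0r; exact: IH.
by rewrite ltr_wpDr // mulr_gt0.
Qed.

Definition normalize mu := [seq (x.1 / mass mu, x.2) | x <- mu].

Lemma wsum_normalize mu f : wsum (normalize mu) f = wsum mu f / mass mu.
Proof. by rewrite /wsum big_map mulr_suml; apply: eq_bigr => x _; rewrite mulrAC. Qed.

Lemma normalize_distribution mu : all (fun x => 0 <= x.1) mu -> 0 < mass mu ->
  distribution (normalize mu).
Proof.
move=> mu_ge0 mass_gt0; split.
  by rewrite all_map; apply: sub_all mu_ge0 => x /= x_ge0; rewrite divr_ge0 // ltW.
have := wsum_normalize mu (fun=> 1); rewrite !wsum_cst !mulr1 => ->.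
by rewrite divff // gt_eqF.
Qed.

End WeightedSums.

Section Alternative.
Variables (R : realFieldType) (W : eqType).

Definition conic (I : finType) (M : I -> W -> R) (f : W -> R) :=
  exists q : I -> R, (forall i, 0 <= q i) /\ forall w, f w = \sum_i q i * M i w.

Lemma conic_row (I : finType) (M : I -> W -> R) i : conic M (M i).
Proof.
exists (fun k => (k == i)%:R); split=> [k|w]; first by rewrite ler0n.
by rewrite (bigD1 i) //= eqxx mul1r big1 ?addr0 // => k /negbTE ->; rewrite mul0r.
Qed.

Lemma conic0 (I : finType) (M : I -> W -> R) : conic M (fun=> 0).
Proof. by exists (fun=> 0); split=> // w; rewrite big1 // => i _; rewrite mul0r. Qed.

Lemma conic_trans (I J : finType) (M : I -> W -> R) (N : J -> W -> R) f :
  (forall j, conic M (N j)) -> conic N f -> conic M f.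
Proof.
move=> /choice[q qP] [c [c_ge0 fE]].
exists (fun i => \sum_j c j * q j i); split=> [i|w].
  by apply: sumr_ge0 => j _; rewrite mulr_ge0 // (proj1 (qP j)).
rewrite fE; under eq_bigr => j _ do rewrite (proj2 (qP j)) mulr_sumr.
rewrite exchange_big; apply: eq_bigr => i _; rewrite mulr_suml.
by apply: eq_bigr => j _; rewrite mulrA.
Qed.

Lemma conic_comb2 (I : finType) (M : I -> W -> R) f g a b : 0 <= a -> 0 <= b ->
  conic M f -> conic M g -> conic M (fun w => a * f w + b * g w).
Proof.
move=> a_ge0 b_ge0 Mf Mg.
apply: (@conic_trans _ _ _ (fun x : bool => if x then f else g)); first by case.
by exists (fun x : bool => if x then a else b); split=> [[]|w] //; rewrite big_bool.
Qed.

Lemma conic_ge0 (I : finType) (M : I -> W -> R) f w :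
  conic M f -> (forall i, 0 <= M i w) -> 0 <= f w.
Proof. by move=> [q [q_ge0 ->]] M_ge0; apply: sumr_ge0 => i _; rewrite mulr_ge0. Qed.

Lemma exists_scale_add_gt0 (f g : W -> R) w0 ws : 0 <= f w0 -> 0 < g w0 ->
  all (fun w => 0 < f w) ws ->
  exists2 K, 0 <= K & all (fun w => 0 < K * f w + g w) (w0 :: ws).
Proof.
move=> f_w0 g_w0 /allP f_gt0.
set m := \big[Num.max/0]_(v <- ws) (`|g v| / f v).
have m_ge0 : 0 <= m := bigmax_ge_id _ _ _ _.
exists (1 + m); first lra.
apply/andP; split; first by rewrite ltr_wpDl // mulr_ge0 //; lra.
apply/allP => w ws_w; have fw_gt0 := f_gt0 w ws_w.
have : `|g w| / f w <= m.
  exact: (le_bigmax_seq 0 w predT (fun v => `|g v| / f v) ws_w).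
rewrite ler_pdivrMr // => gw_le.
have : - g w <= `|g w| by rewrite -normrN ler_norm.
nra.
Qed.

(* Fourier-Motzkin elimination of the point w0: the rows nonnegative at w0, and a
   combination vanishing at w0 of each row positive and each row negative there;
   the remaining indices give the zero row. *)
Definition fm_rows (I : finType) (M : I -> W -> R) w0 (k : I + I * I) : W -> R :=
  match k with
  | inl i => if 0 <= M i w0 then M i else fun=> 0
  | inr (i, j) => if (0 < M i w0) && (M j w0 < 0)
      then fun w => - M j w0 * M i w + M i w0 * M j w else fun=> 0
  end.

Section FourierMotzkin.
Variables (I : finType) (M : I -> W -> R) (w0 : W) (i0 : I).
Hypothesis Mi0_gt0 : 0 < M i0 w0.

Lemma fm_rows_conic k : conic M (fm_rows M w0 k).
Proof.
case: k => [i|[i j]] /=; case: ifP => [|_]; try exact: conic0.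
  by move=> _; exact: conic_row.
by case/andP=> Mi_gt0 Mj_lt0; apply: conic_comb2; rewrite ?mulr_ge0 ?oppr_ge0 ?ltW //;
  exact: conic_row.
Qed.

Lemma fm_rows_ge0 k : 0 <= fm_rows M w0 k w0.
Proof. by case: k => [i|[i j]] /=; case: ifP => //; rewrite mulrC mulrN addNr. Qed.

Lemma fm_primal ws f : conic (fm_rows M w0) f -> all (fun w => 0 < f w) ws ->
  exists2 g, conic M g & all (fun w => 0 < g w) (w0 :: ws).
Proof.
move=> fm_f f_gt0.
have f_w0 : 0 <= f w0 by apply: conic_ge0 fm_f _; exact: fm_rows_ge0.
have [K K_ge0 Kf_gt0] := exists_scale_add_gt0 f_w0 Mi0_gt0 f_gt0.
exists (fun w => K * f w + 1 * M i0 w); last by under eq_all do rewrite mul1r.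
apply: conic_comb2 => //; last exact: conic_row.
exact: conic_trans fm_rows_conic fm_f.
Qed.

Lemma fm_dual (mu : seq (R * W)) :
  (forall k, wsum mu (fm_rows M w0 k) <= 0) ->
  exists2 tau, 0 <= tau & forall i, tau * M i w0 + wsum mu (M i) <= 0.
Proof.
move=> mu_le0; pose S i := wsum mu (M i).
have S_le0 i : 0 <= M i w0 -> S i <= 0.
  by move=> Mi_ge0; have := mu_le0 (inl i); rewrite /= Mi_ge0.
have S_pair i j : 0 < M i w0 -> M j w0 < 0 -> - M j w0 * S i + M i w0 * S j <= 0.
  move=> Mi_gt0 Mj_lt0; have := mu_le0 (inr (i, j)).
  by rewrite /= Mi_gt0 Mj_lt0 wsumD !wsumZ.
pose ratio i := - S i / M i w0.
case: (arg_minP ratio (P := fun i => 0 < M i w0) Mi0_gt0) => i1 Mi1_gt0 i1_min.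
exists (ratio i1); first by rewrite divr_ge0 ?oppr_ge0 ?S_le0 ?ltW.
move=> i; rewrite -/(S i); case: (ltgtP 0 (M i w0)) => Mi.
- by have := i1_min i Mi; rewrite /ratio ler_pdivlMr // => h; lra.
- have ratio_i1 : ratio i1 * M i1 w0 = - S i1 by rewrite /ratio divfK // gt_eqF.
  have := S_pair i1 i Mi1_gt0 Mi; nra.
- by rewrite -Mi mulr0 add0r S_le0 // -Mi.
Qed.

End FourierMotzkin.

Lemma gordan_alternative ws (I : finType) (M : I -> W -> R) :
  (exists2 f, conic M f & all (fun w => 0 < f w) ws) \/
  (exists mu, [/\ all (fun x => (0 <= x.1) && (x.2 \in ws)) mu, 0 < mass mu
                & forall i, wsum mu (M i) <= 0]).
Proof.
elim: ws I M => [|w0 ws IH] I M; first by left; exists (fun=> 0); first exact: conic0.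
have [[i0 Mi0_gt0]|M_le0] := pselect (exists i0, 0 < M i0 w0); last first.
  right; exists [:: (1, w0)]; split.
  - by rewrite /= ler01 mem_head.
  - by rewrite /mass big_seq1 ltr01.
  - move=> i; rewrite /wsum big_seq1 mul1r leNgt; apply/negP => Mi_gt0.
    by apply: M_le0; exists i.
have [[f fm_f f_gt0]|[mu [mu_ws mass_gt0 mu_le0]]] := IH _ (fm_rows M w0).
  by left; exact: (fm_primal Mi0_gt0 fm_f f_gt0).
have [tau tau_ge0 tauP] := fm_dual Mi0_gt0 mu_le0.
right; exists ((tau, w0) :: mu); split.
- rewrite /= tau_ge0 mem_head /=; apply: sub_all mu_ws => x /andP[-> /=].
  by rewrite in_cons orbC => ->.
- by rewrite /mass big_cons ltr_wpDl.
- by move=> i; rewrite /wsum big_cons.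
Qed.

Lemma ville_alternative ws (I : finType) (M : I -> W -> R) : ws != [::] ->
  (exists q : I -> R, [/\ forall i, 0 <= q i, \sum_i q i = 1
                        & all (fun w => 0 < \sum_i q i * M i w) ws]) \/
  (exists mu, [/\ distribution mu, all (fun x => x.2 \in ws) mu
                & forall i, wsum mu (M i) <= 0]).
Proof.
move=> ws_ne; have [[f [q [q_ge0 fE]] f_gt0]|[mu [mu_ws mass_gt0 mu_le0]]] :=
  gordan_alternative ws M; [left|right].
  set Q := \sum_i q i.
  have Q_gt0 : 0 < Q.
    case: ws ws_ne f_gt0 => // w ws _ /andP[fw_gt0 _].
    rewrite lt_def sumr_ge0 // andbT; apply: contraTneq fw_gt0 => Q0.
    rewrite fE big1 ?ltxx // => i _.
    by rewrite (psumr_eq0P (fun i _ => q_ge0 i) Q0) ?mul0r.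
  exists (fun i => q i / Q); split=> [i||].
  - by rewrite divr_ge0 // ltW.
  - by rewrite -mulr_suml divff // gt_eqF.
  - apply: sub_all f_gt0 => w; rewrite fE => fw_gt0.
    by under eq_bigr => i _ do rewrite mulrAC; rewrite -mulr_suml divr_gt0.
have mu_ge0 : all (fun x => 0 <= x.1) mu by apply: sub_all mu_ws => x /andP[].
exists (normalize mu); split.
- exact: normalize_distribution.
- by rewrite all_map; apply: sub_all mu_ws => x /andP[].
- by move=> i; rewrite wsum_normalize mulr_le0_ge0 // invr_ge0 ltW.
Qed.

End Alternative.

Section BoolPatterns.
Variables (R : realFieldType) (K : eqType).
Implicit Types (ks : seq K) (v : K -> bool) (pr : K -> R).

Definition update v k b : K -> bool := fun k' => if k' == k then b else v k'.

Fixpoint patterns ks : seq (K -> bool) :=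
  if ks is k :: ks' then [seq update v k b | b <- [:: true; false], v <- patterns ks']
  else [:: fun=> false].

Lemma patternsP ks v : exists2 v', v' \in patterns ks & {in ks, v' =1 v}.
Proof.
elim: ks => [|k ks [v' v'_pat v'E]] /=; first by exists (fun=> false); rewrite ?mem_seq1.
exists (update v' k (v k)).
  by rewrite mem_cat cats0; case: (v k); apply/orP; [left|right]; apply/mapP; exists v'.
move=> k'; rewrite in_cons /update; case: eqP => [-> //|_ /= ks_k'].
exact: v'E.
Qed.

Fixpoint bernoulli pr ks : seq (R * (K -> bool)) :=
  if ks is k :: ks' then
    [seq (pr k * x.1, update x.2 k true) | x <- bernoulli pr ks'] ++
    [seq ((1 - pr k) * x.1, update x.2 k false) | x <- bernoulli pr ks']
  else [:: (1, fun=> false)].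

Lemma wsum_bernoulli_cons pr k ks h :
  wsum (bernoulli pr (k :: ks)) h =
  pr k * wsum (bernoulli pr ks) (fun v => h (update v k true)) +
  (1 - pr k) * wsum (bernoulli pr ks) (fun v => h (update v k false)).
Proof.
rewrite /wsum big_cat !big_map !mulr_sumr /=.
by congr (_ + _); apply: eq_bigr => x _; rewrite mulrA.
Qed.

Lemma mass_bernoulli pr ks : mass (bernoulli pr ks) = 1.
Proof.
elim: ks => [|k ks IH]; first by rewrite /mass big_seq1.
have := wsum_bernoulli_cons pr k ks (fun=> 1); rewrite !wsum_cst !mulr1 IH => ->.
by rewrite !mulr1 addrC subrK.
Qed.

Lemma bernoulli_distribution pr ks : {in ks, forall k, 0 <= pr k <= 1} ->
  distribution (bernoulli pr ks).
Proof.
move=> pr_01; split; last exact: mass_bernoulli.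
elim: ks pr_01 => [|k ks IH] pr_01 /=; first by rewrite ler01.
have /andP[pr_ge0 pr_le1] := pr_01 k (mem_head _ _).
have {}IH := IH (fun k' ks_k' => pr_01 k' (mem_behead (s := k :: ks) ks_k')).
rewrite all_cat !all_map; apply/andP; split; apply: sub_all IH => x /= x_ge0.
  exact: mulr_ge0.
by rewrite mulr_ge0 // subr_ge0.
Qed.

Lemma bernoulli_marginal pr ks k : k \in ks ->
  wsum (bernoulli pr ks) (fun v => (v k)%:R) = pr k.
Proof.
elim: ks => // k' ks IH; rewrite in_cons wsum_bernoulli_cons /update.
case: eqP => [-> _|_ /IH ->] /=; last by rewrite -mulrDl addrC subrK mul1r.
by rewrite !wsum_cst mass_bernoulli !mulr0 !mulr1 addr0.
Qed.

End BoolPatterns.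

Section LayerSums.
Variables (R : realType) (Omega : Type).
Implicit Types (g : set Omega -> R) (x : Omega -> R) (vs : seq R).

Definition level_sets x : seq (set Omega) := [seq [set w | a <= x w] | a <- values x].

Lemma eq_layer_sum g g' x vs : {in [seq [set w | a <= x w] | a <- vs], g =1 g'} ->
  layer_sum g x vs = layer_sum g' x vs.
Proof.
elim: vs => [|a vs IH] //= gg'; rewrite gg' ?mem_head // IH // => B B_vs.
by apply: gg'; rewrite in_cons B_vs orbT.
Qed.

Lemma layer_sum_wsum (W : Type) (mu : seq (R * W)) (h : W -> set Omega -> R) x vs :
  layer_sum (fun B => wsum mu (h^~ B)) x vs = wsum mu (fun w => layer_sum (h w) x vs).
Proof.
elim: vs => [|a vs IH] /=; first by rewrite wsum_cst mulr0.
by rewrite IH -wsumZ -wsumD.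
Qed.

End LayerSums.

Section MaximalModel.
Variables (R : realType) (P : Type) (Omega : Type) (t : lform P -> set Omega).
Implicit Types (w : Omegam t) (B : set Omega) (mu : seq (R * Omegam t)).

Definition mpoint (v : set Omega -> bool) : Omegam t := fun i => v (sval i).

Lemma mem_tmS_mpoint v B : mindex t B -> (mpoint v \in tmS t B) = v B.
Proof.
move=> B_idx; have [_ [B_T B_0]] := B_idx.
apply/idP/idP => [/set_mem[//|[_ [h vB]]]|vB]; first exact: vB.
by apply: mem_set; right; split => //; exists B_idx.
Qed.

Lemma mem_tmS_nonindex w B : ~ mindex t B -> (w \in tmS t B) = `[< B = setT >].
Proof.
move=> B_nidx; apply/idP/asboolP => [/set_mem[//|[_ [B_idx _]]]|BT] //.
by apply: mem_set; left.
Qed.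

Lemma nonindex_setT_or_set0 phi : ~ mindex t (t phi) -> t phi = setT \/ t phi = set0.
Proof.
move=> nidx; have [|tT] := pselect (t phi = setT); first by left.
have [|t0] := pselect (t phi = set0); first by right.
by exfalso; apply: nidx; split; [exists phi|].
Qed.

Lemma maximal_model_cover (C : seq (set Omega)) w :
  exists2 w', w' \in map mpoint (patterns C) &
    {in C, forall B, (w' \in tmS t B) = (w \in tmS t B)}.
Proof.
have [v v_pat vE] := patternsP C (fun B => w \in tmS t B).
exists (mpoint v); first exact: map_f.
move=> B C_B; have [B_idx|B_nidx] := pselect (mindex t B).
  by rewrite mem_tmS_mpoint // vE.
by rewrite !mem_tmS_nonindex.
Qed.

Lemma tmbullet_congr (z : lform P -> R) w w' :
  {in level_sets (tcirc t z), forall B, (w \in tmS t B) = (w' \in tmS t B)} ->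
  tmbullet t z w = tmbullet t z w'.
Proof. by move=> ww'; apply: eq_layer_sum => B /ww' ->. Qed.

Definition marginal mu B := wsum mu (fun w => (w \in tmS t B)%:R).

Lemma choquet_marginal mu z :
  choquet (marginal mu) (tcirc t z) = wsum mu (tmbullet t z).
Proof. exact: layer_sum_wsum. Qed.

Lemma marginal_likelihood (w0 : Omega) mu :
  distribution mu -> likelihood t (marginal mu).
Proof.
move=> [mu_ge0 mass1].
have tmS0 w : (w \in tmS t set0) = false.
  by apply/negP => /set_mem[T0|[]//]; have : [set: Omega] w0 by []; rewrite -T0.
have tmST w : (w \in tmS t setT) = true by apply: mem_set; left.
split=> [||phi].
- rewrite /marginal (eq_wsum _ (g := fun=> 0)) => [|w]; last by rewrite tmS0.
  by rewrite wsum_cst mulr0.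
- rewrite /marginal (eq_wsum _ (g := fun=> 1)) => [|w]; last by rewrite tmST.
  by rewrite wsum_cst mass1 mulr1.
- rewrite wsum_ge0 //=.
  by rewrite -mass1 -[leRHS]mulr1 -wsum_cst ler_wsum // => w; rewrite lern1 leq_b1.
Qed.

Lemma likelihood_as_marginal lam (C : seq (set Omega)) : likelihood t lam ->
  {in C, forall B, exists phi, t phi = B} ->
  exists mu, distribution mu /\ {in C, marginal mu =1 lam}.
Proof.
move=> [lam0 lam1 lam01] C_range.
(* The sets of C that index no coordinate of Omega^m are setT or set0, where the
   values of lam are forced. *)
pose mu := [seq (x.1, mpoint x.2) | x <- bernoulli lam C].
have wsum_mu h : wsum mu h = wsum (bernoulli lam C) (h \o mpoint).
  by rewrite /wsum big_map.
have [bern_ge0 bern_mass] : distribution (bernoulli lam C).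
  by apply: bernoulli_distribution => B /C_range[phi <-].
have mu_mass : mass mu = 1 by rewrite /mass big_map.
exists mu; split; first by split; rewrite // all_map.
move=> B C_B; have [phi tB] := C_range B C_B.
have [B_idx|B_nidx] := pselect (mindex t B).
  rewrite /marginal wsum_mu -(bernoulli_marginal lam C_B); congr wsum.
  by apply: funext => v /=; rewrite mem_tmS_mpoint.
rewrite /marginal (eq_wsum _ (g := fun=> `[< B = setT >]%:R)) => [|w]; last first.
  by rewrite mem_tmS_nonindex.
rewrite wsum_cst mu_mass mul1r.
rewrite -tB in B_nidx *; case: (nonindex_setT_or_set0 B_nidx) => ->; first by rewrite asboolT.
rewrite asboolF ?lam0 // => T0; move: lam1; rewrite -T0 lam0 => /eqP.
by rewrite eq_sym oner_eq0.
Qed.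

End MaximalModel.

Arguments mpoint {P Omega} t v.

Section Rationalizability.
Variables (R : realType) (P : Type) (T F : P) (Omega : Type) (t : lform P -> set Omega).
Hypotheses (ht : truth_valuation T F t) (hsound : sound T F t).

Lemma t_Or phi psi : t (Or phi psi) = t phi `|` t psi.
Proof.
have [t_lequiv _ t_Neg t_And] := hsound.
have De_Morgan : lequiv T F (Or phi psi) (Neg (And (Neg phi) (Neg psi))).
  by split=> v _ /=; case: (beval v phi); case: (beval v psi).
by rewrite (t_lequiv _ _ De_Morgan) t_Neg t_And !t_Neg setCI !setCK.
Qed.

Lemma t_boolean_combination (L : seq (lform P)) (G : seq bool -> bool) :
  exists psi, t psi = [set w | G [seq w \in t phi | phi <- L]].
Proof.
have [_ _ t_Neg t_And] := hsound.
elim: L G => [|phi L IH] G.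
  case: (boolP (G [::])) => G_nil;
    [exists (Var T); rewrite ht.1 | exists (Var F); rewrite ht.2];
    by apply/seteqP; split=> w //=; rewrite (negbTE G_nil).
have [psi1 t_psi1] := IH (fun bs => G (true :: bs)).
have [psi0 t_psi0] := IH (fun bs => G (false :: bs)).
exists (Or (And phi psi1) (And (Neg phi) psi0)).
rewrite t_Or !t_And t_Neg t_psi1 t_psi0; apply/seteqP; split=> w /=.
  by case: (boolP (w \in t phi)) => [/set_mem|/negP/(contra_not mem_set)] tw [[]|[]].
case: (boolP (w \in t phi)) => [/set_mem|/negP/(contra_not mem_set)] tw Gw.
  by left.
by right.
Qed.

Lemma tcirc_level_set_range (z : lform P -> R) B : strategy z ->
  B \in level_sets (tcirc t z) -> exists phi, t phi = B.
Proof.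
move=> z_fin /mapP[a _ ->]; set L : seq (lform P) := fset_set [set phi | z phi != 0].
have zip_map_self (f : lform P -> bool) : zip L (map f L) = [seq (phi, f phi) | phi <- L].
  by elim: (L : seq _) => //= phi L' ->.
have [psi t_psi] :=
  t_boolean_combination L (fun bs => a <= \sum_(x <- zip L bs) z x.1 * (x.2)%:R).
exists psi; rewrite t_psi; apply/seteqP; split=> w;
  by rewrite /= /tcirc fsbig_finite // zip_map_self big_map.
Qed.

Lemma rationalizable_undominated A s : A `<=` @strategy R P -> A s ->
  rationalizable t A s -> pointwise_undominated t A s.
Proof.
move=> A_strat As [lam [lam_lik s_best]] [y [[l [l_A l_mass yE] y_gt]]].
pose zs := s :: map fst l.
have zs_A z : z \in zs -> A z.
  by rewrite in_cons => /orP[/eqP -> //|/mapP[p /l_A[Ap _] ->]].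
pose C := flatten [seq level_sets (tcirc t z) | z <- zs].
have C_range : {in C, forall B, exists phi, t phi = B}.
  by move=> B /flatten_mapP[z /zs_A Az]; apply: tcirc_level_set_range; exact: A_strat.
have [mu [[mu_ge0 mu_mass] mu_lam]] := likelihood_as_marginal lam_lik C_range.
have choquetE z : z \in zs -> choquet lam (tcirc t z) = wsum mu (tmbullet t z).
  move=> zs_z; rewrite -choquet_marginal; apply: eq_layer_sum => B B_lvl.
  by rewrite mu_lam //; apply/flatten_mapP; exists z.
have : 0 < wsum mu (fun w => y w - tmbullet t s w).
  by apply: wsum_gt0 => // [|w]; rewrite ?mu_mass ?ltr01 ?subr_gt0.
rewrite wsumB -choquetE ?mem_head // (funext yE) wsum_sum subr_gt0 ltNge => /negP; apply.
rewrite -[leRHS]mul1r -{1}l_mass mulr_suml big_seq [leRHS]big_seq; apply: ler_sum => p l_p.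
have [Ap p_ge0] := l_A p l_p.
by rewrite -choquetE ?ler_wpM2l ?s_best // in_cons map_f ?orbT.
Qed.

Lemma undominated_rationalizable (w0 : Omega) A (s : lform P -> R) :
  finite_set A -> pointwise_undominated t A s -> rationalizable t A s.
Proof.
move=> A_fin s_undom; have [sA AE] := (finite_seqP A).1 A_fin.
pose C := flatten [seq level_sets (tcirc t z) | z <- s :: sA].
pose g (i : 'I_(size sA)) := nth s sA i.
pose M i w := tmbullet t (g i) w - tmbullet t s w.
have g_zs i : g i \in s :: sA by rewrite in_cons mem_nth ?orbT.
have cover (w : Omegam t) : exists2 w', w' \in map (mpoint t) (patterns C) &
    forall z, z \in s :: sA -> tmbullet t z w' = tmbullet t z w.
  have [w' w'_ws w'E] := maximal_model_cover C w.
  exists w' => // z zs_z; apply: tmbullet_congr => B B_lvl; apply: w'E.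
  by apply/flatten_mapP; exists z.
have ws_ne : map (mpoint t) (patterns C) != [::].
  by have [w' + _] := cover (fun=> false); case: (map _ _).
have [[q [q_ge0 q_sum q_pos]]|[mu [mu_dist _ mu_le0]]] := ville_alternative M ws_ne.
  exfalso; apply: s_undom.
  exists (fun w => \sum_i q i * tmbullet t (g i) w); split.
    exists [seq (g i, q i) | i <- index_enum 'I_(size sA)]; split.
    - by move=> p /mapP[i _ ->]; rewrite AE /= mem_nth.
    - by rewrite big_map.
    - by move=> w; rewrite big_map.
  move=> w; have [w' w'_ws w'E] := cover w.
  have := allP q_pos w' w'_ws; rewrite /M.
  rewrite (eq_bigr (fun i => q i * tmbullet t (g i) w - q i * tmbullet t s w)) => [|i _].
    by rewrite sumrB -mulr_suml q_sum mul1r subr_gt0.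
  by rewrite mulrBr !w'E ?g_zs ?mem_head.
exists (marginal mu); split; first exact: marginal_likelihood w0 _ mu_dist.
move=> s'; rewrite AE /= -index_mem => sA_s'.
have := mu_le0 (Ordinal sA_s'); rewrite wsumB -!choquet_marginal subr_le0.
by rewrite /g /= nth_index // -index_mem.
Qed.

End Rationalizability.

Theorem proposition10 (R : realType) (P : Type) (T F : P) (Omega : Type)
  (w0 : Omega) (t : lform P -> set Omega)
  (ht : truth_valuation T F t) (hsound : sound T F t)
  (A : set (lform P -> R)) (hAfin : finite_set A) (hAS : A `<=` @strategy R P)
  (s : lform P -> R) (hs : A s) :
  rationalizable t A s <-> pointwise_undominated t A s.
Proof.
split; first exact: (rationalizable_undominated ht hsound hAS hs).
exact: (undominated_rationalizable w0 hAfin).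
Qed.
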